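(* Let $\mathbb P$ be a Bernoulli measure on $\partial\mathcal M$, $f(x)=\mathbb P({\uparrow}x)$ for $x\in\mathcal M$, and let $B=(B_{\gamma,\gamma'})_{\gamma,\gamma'\in\mathfrak C}$ be the non-negative matrix with $B_{\gamma,\gamma'}=f(\gamma')$ if $\gamma\to\gamma'$ and $B_{\gamma,\gamma'}=0$ otherwise. Then the spectral radius of $B$ equals $1$.
   Context: Let $\Sigma$ be a finite set with at least two elements and $I\subseteq\Sigma\times\Sigma$ a symmetric irreflexive relation such that $(\Sigma,(\Sigma\times\Sigma)\setminus I)$ is connected. The heap monoid $\mathcal M=\mathcal M(\Sigma,I)$ is $\Sigma^*$ modulo the smallest congruence containing $(ab,ba)$ for $(a,b)\in I$; $\cdot$ is concatenation, $0$ the empty heap. $x\le y$ iff $y=x\cdot z$ for some $z$. Cliques are heaps formed by distinct pairwise independent pieces; $\mathfrak C$ the nonempty ones; $\gamma\to\gamma'$ iff each piece of $\gamma'$ is dependent (not in $I$) on some piece of $\gamma$. Every nonempty heap has a unique Cartier–Foata decomposition $\gamma_1\cdots\gamma_n$ with $\gamma_i\in\mathfrak C$, $\gamma_i\to\gamma_{i+1}$. The boundary $\partial\mathcal M$ is the set of infinite sequences $(\gamma_n)_{n\ge1}$ of nonempty cliques with $\gamma_n\to\gamma_{n+1}$, ordered together with $\mathcal M$ by $\xi\le\xi'$ iff $\gamma_1\cdots\gamma_n\le\gamma'_1\cdots\gamma'_n$ for all $n$ (finite heaps padded with empty cliques). ${\uparrow}x=\{\xi\in\partial\mathcal M:x\le\xi\}$;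 $\mathcal F$ the generated $\sigma$-algebra. A Bernoulli measure is a probability $\mathbb P$ on $(\partial\mathcal M,\mathcal F)$ with $\mathbb P({\uparrow}(x\cdot y))=\mathbb P({\uparrow}x)\mathbb P({\uparrow}y)$ and $\mathbb P({\uparrow}x)>0$ for all $x,y$. *)

From Stdlib Require Import Reals.
From mathcomp Require Import all_boot.
Local Open Scope R_scope.

Set Implicit Arguments.
Unset Strict Implicit.
Unset Printing Implicit Defensive.

Inductive tequiv (S : finType) (I : rel S) : seq S -> seq S -> Prop :=
| te_refl u : tequiv I u u
| te_swap u w a b : I a b -> tequiv I (u ++ a :: b :: w) (u ++ b :: a :: w)
| te_sym u v : tequiv I u v -> tequiv I v u
| te_trans u v w : tequiv I u v -> tequiv I v w -> tequiv I u w.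

Definition hle (S : finType) (I : rel S) (x y : seq S) : Prop :=
  exists z, tequiv I y (x ++ z).

Definition is_clique (S : finType) (I : rel S) (c : {set S}) : bool :=
  (c != set0) && [forall a in c, forall b in c, (a != b) ==> I a b].

Definition arrow (S : finType) (I : rel S) (c c' : {set S}) : bool :=
  [forall b in c', exists a in c, ~~ I a b].

(* The clique gamma viewed as a heap (order of pieces irrelevant up to tequiv). *)
Definition clique_word (S : finType) (c : {set S}) : seq S := enum c.

(* Boundary: infinite sequences of nonempty cliques with gamma_n -> gamma_{n+1}. *)
Definition bnd_ok (S : finType) (I : rel S) (s : nat -> {set S}) : Prop :=
  forall n, is_clique I (s n) /\ arrow I (s n) (s n.+1).

Definition Bnd (S : finType) (I : rel S) := {s : nat -> {set S} | bnd_ok I s}.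

Definition bprefix (S : finType) (I : rel S) (xi : Bnd I) (n : nat) : seq S :=
  flatten [seq clique_word (proj1_sig xi k) | k <- iota 0 n].

Definition up (S : finType) (I : rel S) (x : seq S) (xi : Bnd I) : Prop :=
  exists n, hle I x (bprefix xi n).

Inductive meas (S : finType) (I : rel S) : (Bnd I -> Prop) -> Prop :=
| m_up (x : seq S) : meas (@up S I x)
| m_compl (A : Bnd I -> Prop) : meas A -> meas (fun xi => ~ A xi)
| m_union (A : nat -> Bnd I -> Prop) :
    (forall n, meas (A n)) -> meas (fun xi => exists n, A n xi)
| m_ext (A B : Bnd I -> Prop) : meas A -> (forall xi, A xi <-> B xi) -> meas B.
Arguments meas {S} I _.

Record is_probability (S : finType) (I : rel S) (P : (Bnd I -> Prop) -> R) : Prop := {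
  pr_ext : forall A B, meas I A -> (forall xi, A xi <-> B xi) -> P A = P B;
  pr_nonneg : forall A, meas I A -> Rle 0 (P A);
  pr_total : P (fun _ => True) = R1;
  pr_sigma : forall A : nat -> Bnd I -> Prop,
      (forall n, meas I (A n)) ->
      (forall n m xi, n <> m -> A n xi -> A m xi -> False) ->
      infinite_sum (fun n => P (A n)) (P (fun xi => exists n, A n xi))
}.

Definition bernoulli (S : finType) (I : rel S) (P : (Bnd I -> Prop) -> R) : Prop :=
  is_probability P /\
  (forall x y : seq S, P (@up S I (x ++ y)) = (P (@up S I x) * P (@up S I y))) /\
  (forall x : seq S, Rlt 0 (P (@up S I x))).

Definition cliques (S : finType) (I : rel S) : seq {set S} :=
  [seq c <- enum {: {set S}} | is_clique I c].

Definition Bmat (S : finType) (I : rel S) (P : (Bnd I -> Prop) -> R)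
  (c c' : {set S}) : R :=
  if arrow I c c' then P (@up S I (clique_word c')) else R0.

Definition Cx := (R * R)%type.
Definition C0 : Cx := (R0, R0).
Definition Cadd (z w : Cx) : Cx := ((z.1 + w.1), (z.2 + w.2)).
Definition Cmul (z w : Cx) : Cx :=
  ((z.1 * w.1 - z.2 * w.2), (z.1 * w.2 + z.2 * w.1)).
Definition Cscale (r : R) (z : Cx) : Cx := ((r * z.1), (r * z.2)).
Definition Cmod (z : Cx) : R := sqrt (z.1 * z.1 + z.2 * z.2).

Definition is_eigenvalue (S : finType) (I : rel S) (M : {set S} -> {set S} -> R)
  (lam : Cx) : Prop :=
  exists v : {set S} -> Cx,
    (exists c, is_clique I c /\ v c <> C0) /\
    forall c, is_clique I c ->
      foldr Cadd C0 [seq Cscale (M c c') (v c') | c' <- cliques I] = Cmul lam (v c).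

Definition spectral_radius_is (S : finType) (I : rel S) (M : {set S} -> {set S} -> R)
  (r : R) : Prop :=
  is_lub (fun t => exists lam, is_eigenvalue I M lam /\ t = Cmod lam) r.

(* Let h(c) be the probability that the first clique of the random boundary point
   is c, and f(x) = P(up x).  Inclusion-exclusion over the pieces commuting with c,
   together with f(c u e) = f(c) f(e) for disjoint c, e with c u e a clique, gives
   h(c) = f(c) g(c) with g(c) = sum_{c -> c'} h(c').  Hence
   (B g)(c) = sum_{c -> c'} f(c') g(c') = sum_{c -> c'} h(c') = g(c), so g is an
   eigenvector of B for the eigenvalue 1.  It is positive: g(c) >= h({a}) for a in c,
   and h({a}) >= f(x) > 0 for a word x containing every letter whose only minimal
   piece is a, which exists because the dependence graph is connected.  Finally a
   nonnegative matrix with a positive eigenvector for 1 has no eigenvalue of modulus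
   larger than 1: compare any eigenvector v with g at a clique maximising |v| / g. *)

From Pilot Require Import Defs.
From Stdlib Require Import Reals Classical Lra Psatz.
From mathcomp Require Import all_boot ssralg ssrnum Rstruct.
From Coquelicot Require Complex.
Set Implicit Arguments.
Unset Strict Implicit.
Unset Printing Implicit Defensive.

Section Trace.
Variables (S : finType) (I : rel S).
Hypotheses (hsym : symmetric I) (hirr : irreflexive I).

Lemma tequiv_catl p u v : tequiv I u v -> tequiv I (p ++ u) (p ++ v).
Proof.
elim=> [w|u0 w a b Iab|u0 v0 _ IH|u0 v0 w0 _ IH1 _ IH2].
- exact: te_refl.
- by rewrite !catA; apply: te_swap.
- exact: te_sym.
- exact: te_trans IH2.
Qed.

Lemma tequiv_catr q u v : tequiv I u v -> tequiv I (u ++ q) (v ++ q).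
Proof.
elim=> [w|u0 w a b Iab|u0 v0 _ IH|u0 v0 w0 _ IH1 _ IH2].
- exact: te_refl.
- by rewrite -!catA /=; apply: te_swap.
- exact: te_sym.
- exact: te_trans IH2.
Qed.

Lemma tequiv_cons a u v : tequiv I u v -> tequiv I (a :: u) (a :: v).
Proof. exact: (tequiv_catl [:: a]). Qed.

Lemma tequiv_to_front b u1 u2 :
  all (I b) u1 -> tequiv I (u1 ++ b :: u2) (b :: u1 ++ u2).
Proof.
elim: u1 => [|x u1 IH] /= Hu1; first exact: te_refl.
case/andP: Hu1 => Ibx Hu1.
apply: te_trans (tequiv_cons x (IH Hu1)) _.
by apply: (te_swap [::]); rewrite hsym.
Qed.

Definition pairwise_indep_seq (u : seq S) := {in u &, forall a b, a != b -> I a b}.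

Lemma tequiv_perm u v :
  uniq u -> pairwise_indep_seq u -> perm_eq u v -> tequiv I u v.
Proof.
elim: v u => [|b v IH] u uu indu uv.
  by rewrite (perm_small_eq _ uv) //; apply: te_refl.
have bu : b \in u by rewrite (perm_mem uv) mem_head.
case/splitPr: bu uu indu uv => u1 u2 uu indu uv.
have mem_u x : x \in u1 ++ u2 -> x \in u1 ++ b :: u2.
  by rewrite !mem_cat inE => /orP[] ->; rewrite ?orbT.
have Ib : all (I b) u1.
  apply/allP=> x xu1; apply: indu; rewrite ?mem_cat ?xu1 ?inE ?eqxx ?orbT //.
  apply: contraTneq uu => ->.
  by rewrite cat_uniq /= xu1 /= andbF.
apply: te_trans (tequiv_to_front u2 Ib) _.
apply: tequiv_cons; apply: IH.
- by move: uu; rewrite !cat_uniq /= => /and3P[-> /norP[_ ->] /andP[_ ->]].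
- by move=> x y xu yu; apply: indu; apply: mem_u.
- by rewrite -(perm_cons b); apply: perm_trans uv; rewrite -[b :: _]cat1s perm_catCA.
Qed.

Definition minimal_piece a (w : seq S) := ohead [seq c <- w | ~~ I a c] == Some a.

Lemma minimal_piece_cat a x y :
  minimal_piece a (x ++ y) =
  if has (fun c => ~~ I a c) x then minimal_piece a x else minimal_piece a y.
Proof. by rewrite /minimal_piece filter_cat has_filter; case: [seq c <- x | _]. Qed.

Lemma minimal_piece_tequiv a u v : tequiv I u v -> minimal_piece a u = minimal_piece a v.
Proof.
elim=> [w|u0 w x y Ixy|u0 v0 _ IH|u0 v0 w0 _ IH1 _ IH2] //; last by rewrite IH1.
rewrite !minimal_piece_cat; case: ifP => // _; rewrite /minimal_piece /=.
case Iax: (I a x); case Iay: (I a y) => //=.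
have xa : x != a by apply: contraTneq Ixy => ->; rewrite Iay.
have ya : y != a by apply: contraTneq Ixy => ->; rewrite hsym Iax.
by rewrite !(inj_eq (@Some_inj _)) (negbTE xa) (negbTE ya).
Qed.

Lemma minimal_piece_head a z : minimal_piece a (a :: z).
Proof. by rewrite /minimal_piece /= hirr. Qed.

Lemma minimal_pieceP a w :
  minimal_piece a w -> exists u1 u2, w = u1 ++ a :: u2 /\ all (I a) u1.
Proof.
elim: w => [|c w IH] //; rewrite /minimal_piece /=; case Iac: (I a c) => /=.
  by case/IH => u1 [u2 [-> Iu1]]; exists (c :: u1), u2; rewrite /= Iac.
by rewrite (inj_eq (@Some_inj _)) => /eqP ->; exists [::], w.
Qed.

Lemma hle_letterE a w : hle I [:: a] w <-> minimal_piece a w.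
Proof.
split; first by case=> z Hz; rewrite (minimal_piece_tequiv a Hz) minimal_piece_head.
by case/minimal_pieceP=> u1 [u2 [-> Iu1]]; exists (u1 ++ u2); apply: tequiv_to_front.
Qed.

Lemma minimal_piece_mem a w : minimal_piece a w -> a \in w.
Proof. by case/minimal_pieceP=> u1 [u2 [-> _]]; rewrite mem_cat mem_head orbT. Qed.

Lemma minimal_piece_indep a w :
  a \in w -> {in w, forall x, x != a -> I a x} -> minimal_piece a w.
Proof.
elim: w => [|c w IH] //; rewrite inE => aw Iw.
have [->|ca] := eqVneq c a; first exact: minimal_piece_head.
have Iac : I a c by apply: Iw; rewrite ?mem_head.
rewrite /minimal_piece /= Iac /=; apply: IH.
  by move: aw; rewrite eq_sym (negbTE ca).
by move=> x xw; apply: Iw; rewrite inE xw orbT.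
Qed.

Lemma dependent_path_not_minimal c a p :
  a != c -> path (fun x y => ~~ I x y) a p -> ~~ minimal_piece c (a :: p).
Proof.
rewrite /minimal_piece; elim: p a => [|b p IH] a ac /=.
  by move=> _; case: (I c a) => //=; rewrite (inj_eq (@Some_inj _)) ac.
case/andP=> Iab pth; case Ica: (I c a) => /=; last by rewrite (inj_eq (@Some_inj _)) ac.
by apply: IH pth; apply: contraNneq Iab => ->; rewrite hsym Ica.
Qed.

Lemma hle_tequivl x y w : tequiv I x y -> hle I x w -> hle I y w.
Proof. by move=> xy [z Hz]; exists z; apply: te_trans Hz (tequiv_catr z xy). Qed.

Lemma hle_catr x w t : hle I x w -> hle I x (w ++ t).
Proof. by case=> z Hz; exists (z ++ t); rewrite catA; apply: tequiv_catr. Qed.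

Lemma hle_catl_inv x y w : hle I (x ++ y) w -> hle I x w.
Proof. by case=> z Hz; exists (y ++ z); rewrite catA. Qed.

End Trace.

Section Boundary.
Variables (S : finType) (I : rel S).
Hypotheses (hsym : symmetric I) (hirr : irreflexive I).

Definition pairwise_indep (c : {set S}) :=
  [forall a in c, forall b in c, (a != b) ==> I a b].

Lemma clique_pairwise_indep c : is_clique I c -> pairwise_indep c.
Proof. by case/andP. Qed.

Lemma pairwise_indepS (e g : {set S}) : e \subset g -> pairwise_indep g -> pairwise_indep e.
Proof.
move=> /subsetP eg /forall_inP Ig; apply/forall_inP => a ae; apply/forall_inP => b be.
by have /forall_inP := Ig a (eg a ae); apply; apply: eg.
Qed.

Lemma pairwise_indep_enum c : pairwise_indep c -> pairwise_indep_seq I (enum c).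
Proof.
move=> /forall_inP Ic x y; rewrite !mem_enum => xc yc.
by have /forall_inP /(_ y yc) /implyP := Ic x xc.
Qed.

Lemma tequiv_enum_setU (g e : {set S}) :
  pairwise_indep (g :|: e) -> [disjoint g & e] ->
  tequiv I (enum (g :|: e)) (enum g ++ enum e).
Proof.
move=> Ige dge; apply: (tequiv_perm hsym (enum_uniq _) (pairwise_indep_enum Ige)).
apply: uniq_perm; rewrite ?enum_uniq //.
  rewrite cat_uniq !enum_uniq /= andbT; apply/hasPn => x.
  by rewrite !mem_enum => xe; rewrite (disjointFl dge xe).
by move=> x; rewrite mem_cat !mem_enum in_setU.
Qed.

(* [bclique xi n] is the clique gamma_(n+1) of the Cartier-Foata decomposition of [xi]. *)
Definition bclique (xi : Bnd I) n := proj1_sig xi n.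

Lemma bclique_clique (xi : Bnd I) n : is_clique I (bclique xi n).
Proof. exact: (proj1 (proj2_sig xi n)). Qed.

Lemma bclique_arrow (xi : Bnd I) n : arrow I (bclique xi n) (bclique xi n.+1).
Proof. exact: (proj2 (proj2_sig xi n)). Qed.

Lemma bprefixS (xi : Bnd I) n : bprefix xi n.+1 = bprefix xi n ++ enum (bclique xi n).
Proof. by rewrite /bprefix -addn1 iotaD map_cat flatten_cat /= cats0. Qed.

Lemma hle_bprefix_mono (xi : Bnd I) x n m :
  (n <= m)%N -> hle I x (bprefix xi n) -> hle I x (bprefix xi m).
Proof.
elim: m => [|m IH]; first by rewrite leqn0 => /eqP ->.
rewrite leq_eqVlt => /orP[/eqP -> //|/IH le_nm /le_nm xn].
by rewrite bprefixS; apply: hle_catr.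
Qed.

Lemma up_letter a (xi : Bnd I) : Defs.up [:: a] xi <-> a \in bclique xi 0.
Proof.
split=> [[n]|a0]; last first.
  exists 1%N; apply/hle_letterE => //; rewrite bprefixS /=.
  apply: (minimal_piece_indep hirr); first by rewrite mem_enum.
  move=> x; rewrite mem_enum => x0 xa.
  by apply: (pairwise_indep_enum (clique_pairwise_indep (bclique_clique xi 0)));
    rewrite ?mem_enum // eq_sym.
move/hle_letterE => /(_ hsym hirr); elim: n => [|n IH] //.
rewrite bprefixS minimal_piece_cat; case: ifP => [_|indep_n]; first exact: IH.
move=> /minimal_piece_mem; rewrite mem_enum.
case: n IH indep_n => [|m] // _ indep_n am.
have /forall_inP /(_ a am) /exists_inP [c cm Ica] := bclique_arrow xi m.
move/hasPn: indep_n => /(_ c); rewrite bprefixS mem_cat mem_enum cm orbT hsym.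
by rewrite Ica => /(_ isT).
Qed.

Lemma up_pairwise_indep (d : {set S}) (xi : Bnd I) :
  pairwise_indep d -> Defs.up (enum d) xi <-> d \subset bclique xi 0.
Proof.
move=> Id; split=> [[n dn]|d0].
  apply/subsetP => a ad; apply/up_letter; exists n.
  apply: (@hle_catl_inv _ _ _ (enum (d :\ a))); rewrite -enum_set1.
  apply: hle_tequivl dn; rewrite -{1}(setD1K ad).
  by apply: tequiv_enum_setU; rewrite ?setD1K // disjoints1 setD11.
exists 1%N; rewrite bprefixS /=.
set X0 := bclique xi 0.
have dX0 : d :|: (X0 :\: d) = X0 by rewrite -{2}(setID X0 d) (setIidPr d0).
exists (enum (X0 :\: d)); rewrite -{1}dX0; apply: tequiv_enum_setU.
  by rewrite dX0; apply/clique_pairwise_indep/bclique_clique.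
by rewrite disjoint_sym disjoints_subset subsetDr.
Qed.

End Boundary.

Section UniqueMinimalPiece.
Variables (S : finType) (I : rel S).
Hypotheses (hsym : symmetric I) (hirr : irreflexive I).

(* Concatenate, for every letter b, a dependency path from a to b. *)
Lemma connected_unique_minimal_word a :
  (forall b, connect (fun x y => ~~ I x y) a b) ->
  exists x : seq S, (forall b, b \in x) /\ (forall c, c != a -> ~~ minimal_piece I c x).
Proof.
move=> conn_a.
have path_to b : exists p, path (fun x y => ~~ I x y) a p && (b == last a p).
  by case/connectP: (conn_a b) => p pth ->; exists p; rewrite pth eqxx.
pose p b := xchoose (path_to b).
exists (flatten [seq a :: p b | b <- enum S]); split.
  move=> b; apply/flattenP; exists (a :: p b); first by apply: map_f; rewrite mem_enum.
  by case/andP: (xchooseP (path_to b)) => _ /eqP {1}->; apply: mem_last.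
move=> c ca; elim: (enum S) => [|b s IH] //=.
rewrite -cat_cons minimal_piece_cat; case: ifP => // _.
apply: (dependent_path_not_minimal hsym); first by rewrite eq_sym.
by case/andP: (xchooseP (path_to b)).
Qed.

Lemma up_unique_minimal_word a x (xi : Bnd I) :
  (forall b, b \in x) -> (forall c, c != a -> ~~ minimal_piece I c x) ->
  Defs.up x xi -> bclique xi 0 = [set a].
Proof.
move=> full uniq_min [n2 xn2].
have only_a b : b \in bclique xi 0 -> b = a.
  move=> /(up_letter hsym hirr) [n1 bn1]; apply: contraTeq (uniq_min b) _.
  have [z xz] := hle_bprefix_mono (leq_addl n1 n2) xn2.
  have := hle_bprefix_mono (leq_addr n2 n1) bn1.
  move/(hle_letterE hsym hirr); rewrite (minimal_piece_tequiv hsym b xz) minimal_piece_cat.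
  by case: ifP => //; move/hasPn/(_ b (full b)); rewrite hirr.
have /set0Pn [b b0] := proj1 (andP (bclique_clique xi 0)).
apply/setP => c; rewrite inE; apply/idP/eqP => [/only_a //|->].
by rewrite -(only_a b b0).
Qed.

End UniqueMinimalPiece.

Section Probability.
Variables (S : finType) (I : rel S) (P : (Bnd I -> Prop) -> R).
Hypothesis hP : is_probability P.
Local Open Scope R_scope.

Lemma meas_True : meas I (fun _ => True).
Proof.
apply: m_ext (m_up I [::]) _ => xi; split=> // _.
by exists 0%N; exists (bprefix xi 0); apply: te_refl.
Qed.

Lemma meas_False : meas I (fun _ => False).
Proof. by apply: m_ext (m_compl meas_True) _ => xi; split. Qed.

Lemma meas_or A B : meas I A -> meas I B -> meas I (fun xi => A xi \/ B xi).
Proof.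
move=> mA mB; apply: m_ext (m_union (A := fun n => if n is 0%N then A else B) _) _.
  by case.
move=> xi; split; first by case=> [[|n]] H; [left|right].
by case=> H; [exists 0%N|exists 1%N].
Qed.

Lemma meas_and A B : meas I A -> meas I B -> meas I (fun xi => A xi /\ B xi).
Proof.
move=> mA mB; apply: m_ext (m_compl (meas_or (m_compl mA) (m_compl mB))) _ => xi.
split; last by case=> a b [].
by move=> nAB; split; apply: NNPP => H; apply: nAB; [left|right].
Qed.

Lemma meas_ex_seq (T : eqType) (s : seq T) (E : T -> Bnd I -> Prop) :
  (forall t, meas I (E t)) -> meas I (fun xi => exists t, t \in s /\ E t xi).
Proof.
move=> mE; elim: s => [|t s IH].
  by apply: m_ext meas_False _ => xi; split=> // [[t []]].
apply: m_ext (meas_or (mE t) IH) _ => xi; split.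
  by case=> [Et|[u [us Eu]]]; [exists t; rewrite mem_head | exists u; rewrite inE us orbT].
by case=> u []; rewrite inE => /orP[/eqP -> Eu|us Eu]; [left|right; exists u].
Qed.

Lemma meas_all_seq (T : eqType) (s : seq T) (E : T -> Bnd I -> Prop) :
  (forall t, meas I (E t)) -> meas I (fun xi => forall t, t \in s -> E t xi).
Proof.
move=> mE; elim: s => [|t s IH]; first by apply: m_ext meas_True _ => xi; split.
apply: m_ext (meas_and (mE t) IH) _ => xi; split.
  by case=> Et Es u; rewrite inE => /orP[/eqP ->|/Es].
by move=> Es; split=> [|u us]; apply: Es; rewrite inE ?eqxx ?us ?orbT.
Qed.

Lemma infinite_sum_eventually_const (u : nat -> R) l L N :
  (forall n, (N <= n)%N -> sum_f_R0 u n = L) -> infinite_sum u l -> l = L.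
Proof.
move=> uL ul; apply: NNPP => lL.
have dist_gt0 : 0 < Rabs (L - l) by apply: Rabs_pos_lt => E; apply: lL; lra.
have [N' HN'] := ul _ dist_gt0.
have := HN' (maxn N N') (leP (leq_maxr _ _)).
by rewrite uL ?leq_maxl // /R_dist; lra.
Qed.

(* Countable additivity for the constant empty family: the partial sums [(n+1) * P False] converge. *)
Lemma prob_False : P (fun _ => False) = 0.
Proof.
have sum_c := pr_sigma hP (A := fun _ _ => False) (fun _ => meas_False)
  (fun _ _ _ _ f _ => f).
have empty_union : P (fun _ => exists n : nat, False) = P (fun _ => False).
  by apply: (pr_ext hP (m_union (fun _ => meas_False))) => xi; split=> // [[]].
rewrite empty_union in sum_c.
have c_ge0 := pr_nonneg hP meas_False.
move: sum_c c_ge0; set c := P _ => sum_c c_ge0.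
case: (Rle_lt_or_eq_dec _ _ c_ge0) => // c_gt0.
have [N HN] := sum_c _ c_gt0.
have := HN N.+1 (leP (leqnSn _)).
rewrite sum_cte /R_dist !S_INR Rabs_right; have := pos_INR N; nra.
Qed.

Lemma prob_or_disjoint A B : meas I A -> meas I B ->
  (forall xi, A xi -> B xi -> False) -> P (fun xi => A xi \/ B xi) = P A + P B.
Proof.
move=> mA mB AB.
pose F n := match n with 0%N => A | 1%N => B | _ => fun _ : Bnd I => False end.
have mF n : meas I (F n) by case: n => [|[|n]] //; apply: meas_False.
have dF n m xi : n <> m -> F n xi -> F m xi -> False.
  by case: n m => [|[|n]] [|[|m]] //= _ Fn Fm; apply: (AB xi).
have -> : P (fun xi => A xi \/ B xi) = P (fun xi => exists n, F n xi).
  apply: (pr_ext hP (meas_or mA mB)) => xi.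
  by split=> [[] ?|[[|[|n]]] //= ?]; [exists 0%N|exists 1%N|left|right].
apply: (infinite_sum_eventually_const (N := 1%N)) (pr_sigma hP mF dF) => n.
case: n => // n _; elim: n => [//|n IH].
by rewrite tech5 IH [P (F _)]prob_False Rplus_0_r.
Qed.

Lemma prob_le A B : meas I A -> meas I B -> (forall xi, A xi -> B xi) -> P A <= P B.
Proof.
move=> mA mB AB.
have mBA : meas I (fun xi => B xi /\ ~ A xi) by apply: meas_and => //; apply: m_compl.
rewrite (pr_ext hP (A := B) (B := fun xi => A xi \/ (B xi /\ ~ A xi))) //.
  rewrite prob_or_disjoint //; last by move=> xi ? [].
  by have := pr_nonneg hP mBA; lra.
move=> xi; split; last by case=> [/AB|[]].
by move=> Bxi; case: (classic (A xi)) => Axi; [left|right].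
Qed.

Lemma prob_ex_seq_disjoint (T : eqType) (s : seq T) (E : T -> Bnd I -> Prop) :
  uniq s -> (forall t, meas I (E t)) ->
  (forall t u xi, t != u -> E t xi -> E u xi -> False) ->
  P (fun xi => exists t, t \in s /\ E t xi) = (\sum_(t <- s) P (E t))%R.
Proof.
move=> us mE dE; elim: s us => [|t s IH] /=.
  move=> _; rewrite big_nil; apply: eq_trans prob_False.
  apply: (pr_ext hP (meas_ex_seq _ mE)).
  by move=> xi; split=> // [[u []]].
case/andP=> ts us; rewrite big_cons -IH // -RplusE -prob_or_disjoint //.
- apply: (pr_ext hP (meas_ex_seq _ mE)) => xi; split.
    by case=> u []; rewrite inE => /orP[/eqP -> Eu|us' Eu]; [left|right; exists u].
  by case=> [Et|[u [us' Eu]]]; [exists t; rewrite mem_head | exists u; rewrite inE us' orbT].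
- exact: meas_ex_seq.
- move=> xi Et [u [us' Eu]]; apply: (dE t u xi) => //.
  by apply: contraNneq ts => ->.
Qed.

End Probability.

Section FirstClique.
Variables (S : finType) (I : rel S).
Hypotheses (hsym : symmetric I) (hirr : irreflexive I).
Variable P : (Bnd I -> Prop) -> R.
Hypothesis hP : is_probability P.

Definition first_clique_is (g : {set S}) (xi : Bnd I) := bclique xi 0 = g.

Lemma meas_first_clique_is g : meas I (first_clique_is g).
Proof.
pose E a : Bnd I -> Prop :=
  if a \in g then Defs.up [:: a] else fun xi => ~ Defs.up [:: a] xi.
have mE a : meas I (E a) by rewrite /E; case: ifP => _; [|apply: m_compl]; apply: m_up.
apply: m_ext (meas_all_seq (enum S) mE) _ => xi.
split=> [Exi|gxi a _]; last first.
  rewrite /E -gxi; case: ifP => [/(up_letter hsym hirr) //|/negP na].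
  by move/(up_letter hsym hirr).
apply/setP => a; have := Exi a; rewrite mem_enum /E => /(_ isT).
case: ifP => ag; first by move/(up_letter hsym hirr).
by move=> nup; apply/negbTE/negP => /(up_letter hsym hirr).
Qed.

Lemma prob_first_clique_not_clique g : ~~ is_clique I g -> P (first_clique_is g) = 0%R.
Proof.
move=> ng; apply: eq_trans (prob_False hP).
apply: (pr_ext hP (meas_first_clique_is g)) => xi; split=> // gxi.
by move: ng; rewrite -gxi bclique_clique.
Qed.

Lemma prob_first_clique_ge0 g : (0 <= P (first_clique_is g))%R.
Proof. exact/RleP/(pr_nonneg hP (meas_first_clique_is g)). Qed.

Lemma prob_up_pairwise_indep d : pairwise_indep I d ->
  P (Defs.up (enum d)) = (\sum_(g : {set S} | d \subset g) P (first_clique_is g))%R.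
Proof.
move=> Id; rewrite -big_enum -prob_ex_seq_disjoint ?enum_uniq //; last first.
- by move=> g g' xi /eqP gg'; rewrite /first_clique_is => ->.
- exact: meas_first_clique_is.
apply: (pr_ext hP (m_up I _)) => xi; rewrite (up_pairwise_indep hsym hirr xi Id).
split=> [d0|[g []]]; first by exists (bclique xi 0); rewrite mem_enum.
by rewrite mem_enum /first_clique_is => dg ->.
Qed.

Lemma prob_up_setU (g e : {set S}) :
  (forall x y : seq S, P (Defs.up (x ++ y)) = (P (Defs.up x) * P (Defs.up y))%R) ->
  pairwise_indep I (g :|: e) -> [disjoint g & e] ->
  P (Defs.up (enum (g :|: e))) = (P (Defs.up (enum g)) * P (Defs.up (enum e)))%R.
Proof.
move=> hmul Ige dge; rewrite -hmul.
have ge_cat := tequiv_enum_setU hsym Ige dge.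
apply: (pr_ext hP (m_up I _)) => xi; split; case=> n xn; exists n.
  exact: hle_tequivl ge_cat xn.
exact: hle_tequivl (te_sym ge_cat) xn.
Qed.

Lemma prob_first_clique_letter_gt0 a :
  (forall b, connect (fun x y => ~~ I x y) a b) ->
  (forall x : seq S, Rlt 0 (P (Defs.up x))) -> Rlt 0 (P (first_clique_is [set a])).
Proof.
move=> conn_a hpos.
have [x [full uniq_min]] := connected_unique_minimal_word hsym conn_a.
apply: Rlt_le_trans (hpos x) _.
apply: (prob_le hP (m_up I x) (meas_first_clique_is _)) => xi.
exact: (up_unique_minimal_word hsym hirr full uniq_min).
Qed.

End FirstClique.

Section Mobius.
Import GRing.Theory.
Local Open Scope ring_scope.
Variables (S : finType) (I : rel S) (K : comPzRingType).
Hypotheses (hsym : symmetric I) (hirr : irreflexive I).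

(* Toggling a fixed [t \in T] pairs off the subsets of [T] with opposite signs. *)
Lemma sum_subset_sign (T : {set S}) :
  \sum_(e : {set S} | e \subset T) (-1) ^+ #|e| = (T == set0)%:R :> K.
Proof.
have [->|[t tT]] := set_0Vmem T.
  rewrite (eq_bigl (pred1 set0)) => [|e]; last by rewrite /= subset0.
  by rewrite big_pred1_eq cards0 expr0 eqxx.
have /negbTE -> : T != set0 by apply/set0Pn; exists t.
pose tog (e : {set S}) := if t \in e then e :\ t else t |: e.
have togK : involutive tog.
  move=> e; rewrite /tog; have [te|te] := boolP (t \in e).
    by rewrite !inE eqxx /= setD1K.
  by rewrite !inE eqxx /= setU1K.
rewrite (bigID (fun e : {set S} => t \in e)) /= addrC.
rewrite [X in _ + X](reindex_inj (can_inj togK)) /=.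
have tog_cond e : (tog e \subset T) && (t \in tog e) = (e \subset T) && (t \notin e).
  rewrite /tog; have [te|te] := boolP (t \in e); first by rewrite !inE eqxx !andbF.
  by rewrite subUset sub1set tT setU11 !andbT.
rewrite [X in _ + X](eq_bigl _ _ tog_cond).
rewrite -big_split big1 // => e /andP[_ /negbTE te].
by rewrite /tog te cardsU1 te add1n exprS mulN1r; apply: subrr.
Qed.

Definition dependent (c : {set S}) := [set b | [exists a in c, ~~ I a b]].
Definition commuting (c : {set S}) := ~: dependent c.

Lemma arrow_dependent (c g : {set S}) : arrow I c g = (g \subset dependent c).
Proof.
apply/forall_inP/subsetP => cg b bg; first by rewrite inE; apply: cg.
by have := cg b bg; rewrite inE.
Qed.

Lemma arrow_commuting (c g : {set S}) : arrow I c g = (g :&: commuting c == set0).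
Proof. by rewrite arrow_dependent /commuting -setDE setD_eq0. Qed.

Lemma arrow_refl (c : {set S}) : arrow I c c.
Proof. by apply/forall_inP => a ac; apply/exists_inP; exists a; rewrite ?hirr. Qed.

Lemma arrow_superset (c g : {set S}) :
  pairwise_indep I g -> c \subset g -> arrow I c g -> g = c.
Proof.
move=> /forall_inP Ig cg /forall_inP cTog; apply/eqP; rewrite eqEsubset cg andbT.
apply/subsetP => b bg; have /exists_inP [a ac nIab] := cTog b bg.
apply: contraR nIab => bc.
have /forall_inP /(_ b bg) /implyP := Ig a (subsetP cg a ac); apply.
by apply: contraNneq bc => <-.
Qed.

Lemma commuting_disjoint (c e : {set S}) : e \subset commuting c -> [disjoint c & e].
Proof.
move=> ec; rewrite disjoint_sym disjoints_subset; apply: subset_trans ec _.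
by rewrite /commuting setCS -arrow_dependent arrow_refl.
Qed.

Lemma pairwise_indep_setU_commuting (c e : {set S}) :
  pairwise_indep I c -> pairwise_indep I e -> e \subset commuting c ->
  pairwise_indep I (c :|: e).
Proof.
move=> /forall_inP Ic /forall_inP Ie /subsetP ec.
have Ice x y : x \in c -> y \in e -> I x y.
  move=> xc /ec; rewrite !inE => /exists_inP nIy; apply/negPn/negP => nIxy.
  by apply: nIy; exists x.
apply/forall_inP => x; rewrite inE => /orP[] xce; apply/forall_inP => y.
  rewrite inE => /orP[] yce; apply/implyP => xy; last exact: Ice.
  by have /forall_inP /(_ y yce) /implyP := Ic x xce; apply.
rewrite inE => /orP[] yce; apply/implyP => xy; first by rewrite hsym; apply: Ice.
by have /forall_inP /(_ y yce) /implyP := Ie x xce; apply.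
Qed.

Variables h f : {set S} -> K.

Definition upper_sum (e : {set S}) := \sum_(g : {set S} | e \subset g) h g.
Definition next_sum (c : {set S}) := \sum_(g : {set S} | arrow I c g) h g.

Hypothesis h_not_clique : forall g, ~~ is_clique I g -> h g = 0.
Hypothesis f_upper_sum : forall d, pairwise_indep I d -> f d = upper_sum d.
Hypothesis f_setU : forall g e, pairwise_indep I (g :|: e) -> [disjoint g & e] ->
   f (g :|: e) = f g * f e.

Lemma upper_sum_not_indep (e : {set S}) : ~~ pairwise_indep I e -> upper_sum e = 0.
Proof.
move=> nIe; rewrite /upper_sum big1 // => g eg; apply: h_not_clique.
by apply: contra nIe => /andP[_]; apply: pairwise_indepS.
Qed.

Lemma next_sum_incl_excl (c : {set S}) :
  next_sum c = \sum_(e : {set S} | e \subset commuting c) (-1) ^+ #|e| * upper_sum e.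
Proof.
rewrite /next_sum big_mkcond /=.
transitivity (\sum_(g : {set S})
  \sum_(e : {set S} | (e \subset g) && (e \subset commuting c)) h g * (-1) ^+ #|e|).
  apply: eq_bigr => g _; rewrite -big_distrr /=.
  rewrite (eq_bigl (fun e : {set S} => e \subset g :&: commuting c)) => [|e];
    last by rewrite subsetI.
  by rewrite sum_subset_sign -arrow_commuting; case: ifP; rewrite ?mulr1 ?mulr0.
rewrite (exchange_big_dep (fun e : {set S} => e \subset commuting c)) /=;
  last by move=> g e _ /andP[].
apply: eq_bigr => e ec; rewrite /upper_sum big_distrr /=.
by apply: eq_big => [g|g _]; rewrite ?ec ?andbT // mulrC.
Qed.

Lemma mobius_clique (c : {set S}) : is_clique I c ->
  h c = \sum_(e : {set S} | e \subset commuting c) (-1) ^+ #|e| * upper_sum (c :|: e).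
Proof.
move=> cc; symmetry.
transitivity (\sum_(e : {set S} | e \subset commuting c)
  \sum_(g : {set S} | c :|: e \subset g) (-1) ^+ #|e| * h g).
  by apply: eq_bigr => e _; rewrite /upper_sum big_distrr.
rewrite (exchange_big_dep xpredT) //=.
transitivity (\sum_(g : {set S}) h g * ((c \subset g) && arrow I c g)%:R).
  apply: eq_bigr => g _; have [cg|ncg] /= := boolP (c \subset g); last first.
    by rewrite mulr0 big_pred0 // => e; rewrite subUset (negbTE ncg) andbF.
  rewrite arrow_commuting -sum_subset_sign big_distrr /=.
  by apply: eq_big => [e|e _]; rewrite ?subUset ?cg ?subsetI 1?andbC // mulrC.
rewrite (bigD1 c) //= subxx arrow_refl mulr1 big1 ?addr0 // => g gc.
have [gcl|ngcl] := boolP (is_clique I g); last by rewrite h_not_clique // mul0r.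
have [/andP[cg cTog]|] := boolP ((c \subset g) && arrow I c g); last by rewrite mulr0.
by move: gc; rewrite (arrow_superset (clique_pairwise_indep gcl) cg cTog) eqxx.
Qed.

Lemma upper_sum_setU (c e : {set S}) : is_clique I c -> e \subset commuting c ->
  upper_sum (c :|: e) = f c * upper_sum e.
Proof.
move=> cc ec; have Ic := clique_pairwise_indep cc.
have [Ie|nIe] := boolP (pairwise_indep I e); last first.
  rewrite !upper_sum_not_indep ?mulr0 //; apply: contra nIe.
  by apply: pairwise_indepS; apply: subsetUr.
have Ice := pairwise_indep_setU_commuting Ic Ie ec.
by rewrite -!f_upper_sum // f_setU // commuting_disjoint.
Qed.

Lemma mobius_factor (c : {set S}) : is_clique I c -> h c = f c * next_sum c.
Proof.
move=> cc; rewrite (mobius_clique cc) next_sum_incl_excl big_distrr /=.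
by apply: eq_bigr => e ec; rewrite (upper_sum_setU cc ec) mulrCA.
Qed.

End Mobius.

Section SpectralBound.
Local Open Scope R_scope.

Lemma Cmod_Coquelicot z : Cmod z = Complex.Cmod z.
Proof. by rewrite /Cmod /Complex.Cmod; f_equal; simpl; ring. Qed.

Lemma Cmod_Cmul z w : Cmod (Cmul z w) = Cmod z * Cmod w.
Proof. by rewrite !Cmod_Coquelicot -Complex.Cmod_mult. Qed.

Lemma Cmod_Cadd_le z w : Cmod (Cadd z w) <= Cmod z + Cmod w.
Proof. by rewrite !Cmod_Coquelicot; apply: Complex.Cmod_triangle. Qed.

Lemma Cmod_Cscale r z : Cmod (Cscale r z) = Rabs r * Cmod z.
Proof.
rewrite /Cmod /Cscale /= -sqrt_Rsqr_abs -sqrt_mult_alt; last exact: Rle_0_sqr.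
by f_equal; rewrite /Rsqr; ring.
Qed.

Lemma Cmod_gt0 z : z <> C0 -> 0 < Cmod z.
Proof.
move=> z0; rewrite Cmod_Coquelicot.
case: (Rle_lt_or_eq_dec _ _ (Complex.Cmod_ge_0 z)) => // /esym /Complex.Cmod_eq_0.
by move/z0.
Qed.

Lemma foldr_Cadd_sum (T : Type) (s : seq T) (F : T -> Cx) :
  foldr Cadd C0 (map F s) = ((\sum_(x <- s) (F x).1)%R, (\sum_(x <- s) (F x).2)%R).
Proof. by elim: s => [|x s IH] /=; rewrite ?big_nil // IH !big_cons. Qed.

Lemma Cmod_foldr_Cscale_le (T : Type) (s : seq T) (b : T -> R) (v : T -> Cx) :
  (forall x, 0 <= b x) ->
  Cmod (foldr Cadd C0 [seq Cscale (b x) (v x) | x <- s]) <=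
  (\sum_(x <- s) b x * Cmod (v x))%R.
Proof.
move=> b_ge0; elim: s => [|x s IH] /=.
  by rewrite big_nil /Cmod /= Rmult_0_l Rplus_0_l sqrt_0; apply: Rle_refl.
rewrite big_cons -RplusE -RmultE.
apply: Rle_trans (Cmod_Cadd_le _ _) _.
rewrite Cmod_Cscale Rabs_right; last exact: Rle_ge.
exact: Rplus_le_compat_l.
Qed.

Lemma exists_maximizer (T : eqType) (r : T -> R) (s : seq T) (y : T) :
  y \in s -> exists2 c, c \in s & {in s, forall c', r c' <= r c}.
Proof.
elim: s y => [|z s IH] y // _.
case: s IH => [_|y' s /(_ y' (mem_head y' s)) [c cs cmax]].
  by exists z; rewrite ?mem_head // => c'; rewrite inE => /eqP ->; apply: Rle_refl.
case: (Rle_dec (r z) (r c)) => [zc|/Rnot_le_lt zc].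
  exists c; first by rewrite inE cs orbT.
  by move=> c'; rewrite inE => /orP[/eqP ->|/cmax].
exists z; first exact: mem_head.
move=> c'; rewrite inE => /orP[/eqP ->|/cmax c'c]; first exact: Rle_refl.
by apply: Rle_trans c'c _; apply: Rlt_le.
Qed.

(* Collatz--Wielandt: compare [v] with the positive eigenvector [u] at an index
   maximising [|v| / u]. *)
Lemma eigenvalue_Cmod_le (T : eqType) (s : seq T) (M : T -> T -> R) (u : T -> R)
    (rho : R) (lam : Cx) (v : T -> Cx) (c1 : T) :
  (forall c c', 0 <= M c c') -> {in s, forall c, 0 < u c} ->
  {in s, forall c, (\sum_(c' <- s) M c c' * u c')%R = rho * u c} ->
  c1 \in s -> v c1 <> C0 ->
  {in s, forall c, foldr Cadd C0 [seq Cscale (M c c') (v c') | c' <- s] = Cmul lam (v c)} ->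
  Cmod lam <= rho.
Proof.
move=> M_ge0 u_gt0 Mu c1s vc1 Mv.
pose ratio c := Cmod (v c) / u c.
have [c0 c0s c0max] := exists_maximizer ratio c1s.
have u0 := u_gt0 c0 c0s.
have ratio_gt0 : 0 < ratio c0.
  apply: Rlt_le_trans (c0max c1 c1s).
  exact: Rdiv_lt_0_compat (Cmod_gt0 vc1) (u_gt0 c1 c1s).
have v0 : Cmod (v c0) = ratio c0 * u c0 by rewrite /ratio; field; lra.
have v_le c : c \in s -> Cmod (v c) <= ratio c0 * u c.
  move=> cs; have uc := u_gt0 c cs.
  have -> : Cmod (v c) = ratio c * u c by rewrite /ratio; field; lra.
  by apply: Rmult_le_compat_r (c0max c cs); lra.
have key : Cmod lam * Cmod (v c0) <= rho * Cmod (v c0).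
  rewrite -Cmod_Cmul -(Mv c0 c0s); apply: Rle_trans (Cmod_foldr_Cscale_le _ _ (M_ge0 c0)) _.
  rewrite v0 Rmult_comm Rmult_assoc (Rmult_comm (u c0)) -(Mu c0 c0s) RmultE big_distrr /=.
  rewrite big_seq [X in Rle _ X]big_seq; apply/RleP/Num.Theory.ler_sum => c cs.
  by rewrite GRing.mulrCA; apply/RleP/Rmult_le_compat_l; [apply: M_ge0|apply: v_le].
have vc0 : 0 < Cmod (v c0) by rewrite v0; apply: Rmult_lt_0_compat.
exact: Rmult_le_reg_r vc0 key.
Qed.

End SpectralBound.

Lemma clique_set1 (S : finType) (I : rel S) (a : S) : is_clique I [set a].
Proof.
apply/andP; split; first by apply/set0Pn; exists a; rewrite in_set1.
by apply/forall_inP => x /set1P ->; apply/forall_inP => y /set1P ->; rewrite eqxx.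
Qed.

Lemma mem_cliques (S : finType) (I : rel S) (c : {set S}) :
  (c \in cliques I) = is_clique I c.
Proof. by rewrite /cliques mem_filter mem_enum andbT. Qed.

Section PerronVector.
Variables (S : finType) (I : rel S).
Hypotheses (hsym : symmetric I) (hirr : irreflexive I).
Hypothesis hconn : forall a b : S, connect (fun x y => ~~ I x y) a b.
Variable P : (Bnd I -> Prop) -> R.
Hypothesis hprob : is_probability P.
Hypothesis hmul : forall x y : seq S, P (Defs.up (x ++ y)) = (P (Defs.up x) * P (Defs.up y))%R.
Hypothesis hpos : forall x : seq S, Rlt 0 (P (Defs.up x)).

Definition first_clique_prob (g : {set S}) := P (first_clique_is g).
Definition successor_prob (c : {set S}) := next_sum I first_clique_prob c.

Lemma first_clique_prob_factor c : is_clique I c ->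
  first_clique_prob c = (P (Defs.up (clique_word c)) * successor_prob c)%R.
Proof.
apply: (mobius_factor hsym hirr (f := fun g => P (Defs.up (enum g)))).
- exact: prob_first_clique_not_clique.
- exact: prob_up_pairwise_indep.
- by move=> g e; apply: prob_up_setU.
Qed.

Lemma successor_prob_gt0 c : is_clique I c -> Rlt 0 (successor_prob c).
Proof.
case/andP => /set0Pn [a ac] _; apply/RltP.
have cTa : arrow I c [set a].
  by apply/forall_inP => b /set1P ->; apply/exists_inP; exists a; rewrite ?hirr.
rewrite /successor_prob /next_sum (bigD1 [set a]) //=; apply: Num.Theory.ltr_pwDl.
  exact/RltP/(prob_first_clique_letter_gt0 hsym hirr hprob (hconn a) hpos).
by apply: Num.Theory.sumr_ge0 => g _; apply: prob_first_clique_ge0.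
Qed.

Lemma Bmat_successor_prob c :
  (\sum_(c' <- cliques I) Bmat P c c' * successor_prob c')%R = successor_prob c.
Proof.
rewrite /cliques big_filter big_enum_cond /= big_mkcond /successor_prob /next_sum.
rewrite [RHS]big_mkcond /=; apply: eq_bigr => c' _; rewrite /Bmat.
have [c'cl|nc'cl] := boolP (is_clique I c'); have [cTc'|_] //= := boolP (arrow I c c').
- by rewrite -first_clique_prob_factor.
- exact: Rmult_0_l.
- by rewrite /first_clique_prob (prob_first_clique_not_clique hsym hirr hprob).
Qed.

Lemma Bmat_eigenvalue_Cmod_le lam : is_eigenvalue I (Bmat P) lam -> Rle (Cmod lam) R1.
Proof.
case=> v [[c1 [c1cl vc1]] Bv].
apply: (eigenvalue_Cmod_le (s := cliques I) (M := Bmat P) (u := successor_prob) (c1 := c1)).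
- move=> c c'; rewrite /Bmat; case: ifP => _; last exact: Rle_refl.
  by apply: Rlt_le; apply: hpos.
- by move=> c; rewrite mem_cliques; apply: successor_prob_gt0.
- by move=> c _; rewrite Bmat_successor_prob Rmult_1_l.
- by rewrite mem_cliques.
- exact: vc1.
- by move=> c; rewrite mem_cliques; apply: Bv.
Qed.

Lemma Bmat_eigenvalue1 (a : S) : is_eigenvalue I (Bmat P) (R1, R0).
Proof.
exists (fun c => (successor_prob c, R0)); split.
  exists [set a]; split; first exact: clique_set1.
  by case=> ua; have := successor_prob_gt0 (clique_set1 I a); rewrite ua; apply: Rlt_irrefl.
move=> c _; rewrite foldr_Cadd_sum /Cmul /= Bmat_successor_prob; congr (_, _).
  by rewrite Rmult_1_l Rmult_0_l Rminus_0_r.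
by rewrite big1 => [|c' _]; rewrite ?Rmult_0_r // Rmult_0_l Rplus_0_r.
Qed.

End PerronVector.

Theorem lemma4 (S : finType) (I : rel S)
  (hS : (1 < #|S|)%N) (hsym : symmetric I) (hirr : irreflexive I)
  (hconn : forall a b : S, connect (fun x y => ~~ I x y) a b)
  (P : (Bnd I -> Prop) -> R) (hP : @bernoulli S I P) :
  @spectral_radius_is S I (@Bmat S I P) R1.
Proof.
case: hP => hprob [hmul hpos]; have [a _] := card_gt0P (ltnW hS).
split; last move=> b ub.
  move=> t [lam [Elam ->]].
  exact: (Bmat_eigenvalue_Cmod_le hsym hirr hconn hprob hmul hpos Elam).
apply: ub; exists (R1, R0); split.
  exact: (Bmat_eigenvalue1 hsym hirr hconn hprob hmul hpos a).
by rewrite /Cmod /= Rmult_1_l Rmult_0_l Rplus_0_r sqrt_1.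
Qed.
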